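(* Let $R$ be a ring with identity, ${}_RM$ a left $R$-module, $\varphi\in\mathrm{Hom}_R(M,M)$, and $r\ge1$ an integer such that $\ker(\varphi^r)\oplus\mathrm{im}(\varphi^r)=M$. Let $\varphi_1=\varphi\restriction\ker(\varphi^r)$ and $\varphi_2=\varphi\restriction\mathrm{im}(\varphi^r)$. Then there is an isomorphism of $Z(R)$-algebras $C_\varphi\cong C_{\varphi_1}\times C_{\varphi_2}$, where $C_\varphi\subseteq\mathrm{Hom}_R(M,M)$, $C_{\varphi_1}\subseteq\mathrm{Hom}_R(\ker(\varphi^r),\ker(\varphi^r))$ and $C_{\varphi_2}\subseteq\mathrm{Hom}_R(\mathrm{im}(\varphi^r),\mathrm{im}(\varphi^r))$ are the respective centralizers.
   Context: For an endomorphism $\alpha$ of a module $N$, $C_\alpha=\{\psi\in\mathrm{Hom}_R(N,N)\mid\psi\circ\alpha=\alpha\circ\psi\}$. $Z(R)$ is the centre of $R$. Note $\varphi$ maps $\ker(\varphi^r)$ and $\mathrm{im}(\varphi^r)$ into themselves. *)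

From HB Require Import structures.
From mathcomp Require Import all_boot all_order all_algebra.
From mathcomp Require Import boolp.
Set Implicit Arguments.
Unset Strict Implicit.
Unset Printing Implicit Defensive.
Import GRing.Theory.
Local Open Scope ring_scope.

Section SubModType.
Variables (R : pzRingType) (M : lmodType R) (S : submodClosed M).
Record submod_of := SubmodOf { submod_val : M; submod_valP : submod_val \in S }.
HB.instance Definition _ := [isSub for submod_val].
HB.instance Definition _ := [Choice of submod_of by <:].
HB.instance Definition _ := [SubChoice_isSubLmodule of submod_of by <:].
End SubModType.

Section KerIm.
Variables (R : pzRingType) (M : lmodType R) (phi : {linear M -> M}) (r : nat).

Definition kerpow : pred M := fun x => iter r phi x == 0.
Definition impow : pred M := fun x => `[< exists y, x = iter r phi y >].

Lemma iter_lin n a u v :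
  iter n phi (a *: u + v) = a *: iter n phi u + iter n phi v.
Proof. by elim: n => [|n IH] //=; rewrite IH linearP. Qed.

Lemma iter_0 n : iter n phi 0 = 0.
Proof. by elim: n => [|n IH] //=; rewrite IH linear0. Qed.

Lemma kerpow_closed : subsemimod_closed kerpow.
Proof.
apply: GRing.submod_closed_semi; split.
  by rewrite unfold_in /kerpow /= iter_0.
move=> a u v; rewrite !unfold_in /kerpow /= iter_lin => /eqP -> /eqP ->.
by rewrite scaler0 addr0.
Qed.


Lemma impow_closed : subsemimod_closed impow.
Proof.
apply: GRing.submod_closed_semi; split.
  by rewrite unfold_in /impow; apply/asboolP; exists 0; rewrite iter_0.
move=> a u v; rewrite !unfold_in /impow => /asboolP [y ->] /asboolP [z ->].
by apply/asboolP; exists (a *: y + z); rewrite iter_lin.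
Qed.


Lemma iter_phi_comm n x : iter n phi (phi x) = phi (iter n phi x).
Proof. by elim: n => [|n IH] //=; rewrite IH. Qed.

Lemma kerpow_stable x : x \in kerpow -> phi x \in kerpow.
Proof.
by rewrite !unfold_in /kerpow /= iter_phi_comm => /eqP ->; rewrite linear0.
Qed.

Lemma impow_stable x : x \in impow -> phi x \in impow.
Proof.
rewrite !unfold_in /impow => /asboolP [y ->].
by apply/asboolP; exists (phi y); rewrite iter_phi_comm.
Qed.

End KerIm.

HB.instance Definition _ (R : pzRingType) (M : lmodType R)
  (phi : {linear M -> M}) (r : nat) :=
  GRing.isSubmodClosed.Build R M (kerpow phi r) (kerpow_closed phi r).
HB.instance Definition _ (R : pzRingType) (M : lmodType R)
  (phi : {linear M -> M}) (r : nat) :=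
  GRing.isSubmodClosed.Build R M (impow phi r) (impow_closed phi r).

Definition KerMod (R : pzRingType) (M : lmodType R) (phi : {linear M -> M})
  (r : nat) : lmodType R :=
  submod_of (GRing.SubmodClosed.clone _ _ (kerpow phi r) _).
Definition ImMod (R : pzRingType) (M : lmodType R) (phi : {linear M -> M})
  (r : nat) : lmodType R :=
  submod_of (GRing.SubmodClosed.clone _ _ (impow phi r) _).

Definition phi_ker (R : pzRingType) (M : lmodType R) (phi : {linear M -> M})
  (r : nat) (x : KerMod phi r) : KerMod phi r :=
  @SubmodOf _ _ (GRing.SubmodClosed.clone _ _ (kerpow phi r) _)
    (phi (submod_val x)) (kerpow_stable (submod_valP x)).
Definition phi_im (R : pzRingType) (M : lmodType R) (phi : {linear M -> M})
  (r : nat) (x : ImMod phi r) : ImMod phi r :=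
  @SubmodOf _ _ (GRing.SubmodClosed.clone _ _ (impow phi r) _)
    (phi (submod_val x)) (impow_stable (submod_valP x)).

Definition direct_sum_eq (R : pzRingType) (M : lmodType R) (N1 N2 : pred M) :=
  (forall x, x \in N1 -> x \in N2 -> x = 0) /\
  (forall x, exists y z, [/\ y \in N1, z \in N2 & x = y + z]).

Definition center (R : pzRingType) : pred R :=
  fun z => `[< forall a : R, z * a = a * z >].

Definition centralizer (R : pzRingType) (N : lmodType R) (alpha : N -> N)
  (psi : N -> N) : Prop := linear psi /\ psi \o alpha = alpha \o psi.

(* Phi is an isomorphism of Z(R)-algebras from the subalgebra A of End_R(N)
   onto the product algebra B1 x B2 (B1 in End_R(N1), B2 in End_R(N2)), where
   the algebra operations are pointwise sum, composition, identity, and the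
   Z(R)-action (z . psi)(x) = z *: psi x. *)
Definition Zalg_iso_prod (R : pzRingType) (N N1 N2 : lmodType R)
  (A : (N -> N) -> Prop) (B1 : (N1 -> N1) -> Prop) (B2 : (N2 -> N2) -> Prop)
  (Phi : (N -> N) -> (N1 -> N1) * (N2 -> N2)) : Prop :=
  (forall psi, A psi -> B1 (Phi psi).1 /\ B2 (Phi psi).2) /\
      (forall psi chi, A psi -> A chi -> Phi psi = Phi chi -> psi = chi) /\
      (forall f g, B1 f -> B2 g -> exists2 psi, A psi & Phi psi = (f, g)) /\
      (forall psi chi, A psi -> A chi ->
         Phi (fun x => psi x + chi x) =
         (fun x => (Phi psi).1 x + (Phi chi).1 x,
          fun x => (Phi psi).2 x + (Phi chi).2 x)) /\
      (forall psi chi, A psi -> A chi ->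
         Phi (psi \o chi) = ((Phi psi).1 \o (Phi chi).1,
                             (Phi psi).2 \o (Phi chi).2)) /\
      Phi id = (id, id) /\
      (forall (z : R) psi, z \in @center R -> A psi ->
         Phi (fun x => z *: psi x) =
         (fun x => z *: (Phi psi).1 x, fun x => z *: (Phi psi).2 x)).

(* Every endomorphism commuting with phi also commutes with phi^r, hence
   stabilises ker(phi^r) and im(phi^r).  Restriction to the two summands of
   M = ker(phi^r) (+) im(phi^r) is therefore defined on C_phi; it
   respects sums, composition, identity and central scalars, it is injective
   because a linear map is determined by its values on the summands, and it is
   onto because a pair (f, g) glues along the decomposition x = y + z to the
   map x |-> f y + g z, which commutes with phi since phi preserves the
   decomposition. *)
From HB Require Import structures.
From mathcomp Require Import all_boot all_order all_algebra.
From mathcomp Require Import boolp.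
Import GRing.Theory.
Local Open Scope ring_scope.

Section LinearFor.
Context {R : pzRingType} {N : lmodType R} {psi : N -> N}.
Hypothesis psi_lin : linear psi.

Lemma linear_add u v : psi (u + v) = psi u + psi v.
Proof. exact: (GRing.semilinear_linear psi_lin).2. Qed.

Lemma linear_scale a u : psi (a *: u) = a *: psi u.
Proof. exact: (GRing.semilinear_linear psi_lin).1. Qed.

Lemma linear_zero : psi 0 = 0.
Proof. by have := linear_scale 0 0; rewrite !scale0r. Qed.

End LinearFor.

Section Restriction.
Context {R : pzRingType} {M : lmodType R} {S : submodClosed M}.
Implicit Types (phi psi chi : M -> M) (k : submod_of S).

(* The junk default [0] of [insubd] keeps [restr psi] total; it is the genuine
   restriction only when [psi] stabilises [S]. *)
Definition restr psi k : submod_of S := insubd 0 (psi (val k)).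

Lemma insubd_linear a y1 y2 : y1 \in S -> y2 \in S ->
  insubd (0 : submod_of S) (a *: y1 + y2) = a *: insubd 0 y1 + insubd 0 y2.
Proof.
move=> Sy1 Sy2; apply: val_inj.
by rewrite linearP /= !val_insubd Sy1 Sy2 rpredD ?rpredZ.
Qed.

Lemma val_restr {psi : M -> M} : {homo psi : x / x \in S} ->
  forall k, val (restr psi k) = psi (val k).
Proof. by move=> psiS k; rewrite val_insubd psiS //; apply: valP. Qed.

Lemma insubd_restr {psi : M -> M} {y : M} :
  {homo psi : x / x \in S} -> y \in S ->
  insubd 0 (psi y) = restr psi (insubd 0 y).
Proof.
by move=> psiS Sy; apply: val_inj; rewrite val_restr // !val_insubd Sy psiS.
Qed.

Section Stable.
Context {psi chi : M -> M}.
Hypotheses (psiS : {homo psi : x / x \in S}) (chiS : {homo chi : x / x \in S}).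

Lemma eq_in_restr : restr psi = restr chi -> {in S, psi =1 chi}.
Proof.
move=> eq_restr x Sx; rewrite -(insubdK (0 : submod_of S) Sx).
by rewrite -(val_restr psiS) -(val_restr chiS) eq_restr.
Qed.

Lemma restr_linear : linear psi -> linear (restr psi).
Proof.
move=> psi_lin a k l; apply: val_inj.
by rewrite [RHS]linearP /= !(val_restr psiS) linearP psi_lin.
Qed.

Lemma restrD :
  restr (fun x => psi x + chi x) = fun k => restr psi k + restr chi k.
Proof.
apply: funext => k; apply: val_inj.
by rewrite raddfD /= !val_restr // => x Sx; rewrite rpredD ?psiS ?chiS.
Qed.

Lemma restr_comp : restr (psi \o chi) = restr psi \o restr chi.
Proof.
apply: funext => k; apply: val_inj.
by rewrite /= !val_restr // => x Sx /=; rewrite psiS ?chiS.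
Qed.

Lemma restrZ z : restr (fun x => z *: psi x) = fun k => z *: restr psi k.
Proof.
apply: funext => k; apply: val_inj.
by rewrite linearZ /= !val_restr // => x Sx; rewrite rpredZ ?psiS.
Qed.

End Stable.

Lemma restr_id : restr id = id.
Proof. by apply: funext => k; apply: val_inj; rewrite val_restr. Qed.

Lemma restr_centralizer phi psi :
  {homo phi : x / x \in S} -> {homo psi : x / x \in S} ->
  centralizer phi psi -> centralizer (restr phi) (restr psi).
Proof.
move=> phiS psiS [psi_lin psi_phi]; split; first exact: restr_linear.
by rewrite -!restr_comp // psi_phi.
Qed.

End Restriction.

Section DirectSum.
Context {R : pzRingType} {M : lmodType R} (S1 S2 : submodClosed M).
Hypothesis dsM : direct_sum_eq (S1 : {pred M}) (S2 : {pred M}).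

Lemma direct_sum_uniq {y1 z1 y2 z2 : M} :
  y1 \in S1 -> z1 \in S2 -> y2 \in S1 -> z2 \in S2 ->
  y1 + z1 = y2 + z2 -> y1 = y2 /\ z1 = z2.
Proof.
move=> Sy1 Sz1 Sy2 Sz2 eq_sum.
have eq_diff : y1 - y2 = z2 - z1.
  by apply/eqP; rewrite subr_eq addrAC (addrC z2) -eq_sum addrK.
have diff0 : y1 - y2 = 0.
  by apply: dsM.1; [|rewrite eq_diff]; rewrite -scaleN1r rpredD ?rpredZ.
by split; apply/eqP; rewrite -subr_eq0 ?diff0 // -opprB -eq_diff diff0 oppr0.
Qed.

Lemma direct_sum_split x :
  exists p : M * M, [/\ p.1 \in S1, p.2 \in S2 & x = p.1 + p.2].
Proof. by have [y [z [Sy Sz ->]]] := dsM.2 x; exists (y, z). Qed.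

Definition dsplit x : M * M := projT1 (cid (direct_sum_split x)).

Lemma dsplitP x : [/\ (dsplit x).1 \in S1, (dsplit x).2 \in S2 &
  x = (dsplit x).1 + (dsplit x).2].
Proof. exact: projT2 (cid (direct_sum_split x)). Qed.

Lemma dsplit_eq {x y z : M} :
  y \in S1 -> z \in S2 -> x = y + z -> dsplit x = (y, z).
Proof.
move=> Sy Sz eq_x; have [S1x S2x eq_split] := dsplitP x.
move: (direct_sum_uniq S1x S2x Sy Sz (etrans (esym eq_split) eq_x)).
by case: (dsplit x) => a b [/= -> ->].
Qed.

Lemma dsplit_linear a u v :
  dsplit (a *: u + v) = (a *: (dsplit u).1 + (dsplit v).1,
                         a *: (dsplit u).2 + (dsplit v).2).
Proof.
have [S1u S2u eq_u] := dsplitP u; have [S1v S2v eq_v] := dsplitP v.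
apply: dsplit_eq; rewrite ?rpredD ?rpredZ //.
by rewrite {1}eq_u {1}eq_v scalerDr addrACA.
Qed.

Lemma dsplit_morph (phi : {linear M -> M}) x :
  {homo phi : y / y \in S1} -> {homo phi : y / y \in S2} ->
  dsplit (phi x) = (phi (dsplit x).1, phi (dsplit x).2).
Proof.
move=> phiS1 phiS2; have [S1x S2x eq_x] := dsplitP x.
by apply: dsplit_eq; rewrite ?phiS1 ?phiS2 // {1}eq_x linearD.
Qed.

Lemma linear_eq_on_summands (psi chi : M -> M) : linear psi -> linear chi ->
  {in S1, psi =1 chi} -> {in S2, psi =1 chi} -> psi = chi.
Proof.
move=> psi_lin chi_lin eq1 eq2; apply: funext => x.
have [S1x S2x ->] := dsplitP x.
by rewrite (linear_add psi_lin) (linear_add chi_lin) eq1 ?eq2.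
Qed.

Section Glue.
Variables (f : submod_of S1 -> submod_of S1) (g : submod_of S2 -> submod_of S2).

Definition glue x : M :=
  val (f (insubd 0 (dsplit x).1)) + val (g (insubd 0 (dsplit x).2)).

Lemma glue_linear : linear f -> linear g -> linear glue.
Proof.
move=> f_lin g_lin a u v; rewrite /glue dsplit_linear.
have [S1u S2u _] := dsplitP u; have [S1v S2v _] := dsplitP v.
rewrite !insubd_linear // f_lin g_lin !linearP /=.
by rewrite scalerDr addrACA.
Qed.

Lemma restr_glue1 : linear g -> restr glue = f.
Proof.
move=> g_lin; apply: funext => k; apply: val_inj.
rewrite val_insubd /glue (dsplit_eq (valP k) (rpred0 S2)) ?addr0 //=.
have -> : insubd (0 : submod_of S2) 0 = 0.
  by apply: val_inj; rewrite val_insubd rpred0.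
by rewrite valKd (linear_zero g_lin) addr0; case: (f k) => y /= ->.
Qed.

Lemma restr_glue2 : linear f -> restr glue = g.
Proof.
move=> f_lin; apply: funext => k; apply: val_inj.
rewrite val_insubd /glue (dsplit_eq (rpred0 S1) (valP k)) ?add0r //=.
have -> : insubd (0 : submod_of S1) 0 = 0.
  by apply: val_inj; rewrite val_insubd rpred0.
by rewrite valKd (linear_zero f_lin) add0r; case: (g k) => y /= ->.
Qed.

Lemma glue_centralizer (phi : {linear M -> M}) :
  {homo phi : y / y \in S1} -> {homo phi : y / y \in S2} ->
  centralizer (restr phi) f -> centralizer (restr phi) g ->
  centralizer phi glue.
Proof.
move=> phiS1 phiS2 [f_lin f_phi] [g_lin g_phi].
split; first exact: glue_linear.
have f_phik k : f (restr phi k) = restr phi (f k).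
  exact: (congr1 (fun h => h k) f_phi).
have g_phik k : g (restr phi k) = restr phi (g k).
  exact: (congr1 (fun h => h k) g_phi).
apply: funext => x; have [S1x S2x _] := dsplitP x.
rewrite /= /glue dsplit_morph //; cbn [fst snd].
rewrite linearD (insubd_restr phiS1 S1x) (insubd_restr phiS2 S2x).
by rewrite f_phik g_phik (val_restr phiS1) (val_restr phiS2).
Qed.

End Glue.

Theorem restr_centralizer_iso (phi : {linear M -> M}) :
  (forall psi, centralizer phi psi ->
     {homo psi : x / x \in S1} /\ {homo psi : x / x \in S2}) ->
  Zalg_iso_prod (centralizer phi)
    (centralizer (restr phi : submod_of S1 -> submod_of S1))
    (centralizer (restr phi : submod_of S2 -> submod_of S2))
    (fun psi => (restr psi, restr psi)).
Proof.
move=> stableC.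
have [phiS1 phiS2] : {homo phi : x / x \in S1} /\ {homo phi : x / x \in S2}.
  by apply: stableC; split; [exact: linearP | ].
split=> [psi Cpsi|].
  have [psiS1 psiS2] := stableC _ Cpsi.
  by split; apply: restr_centralizer.
split=> [psi chi Cpsi Cchi [eq1 eq2]|].
  have [psiS1 psiS2] := stableC _ Cpsi; have [chiS1 chiS2] := stableC _ Cchi.
  by apply: linear_eq_on_summands Cpsi.1 Cchi.1 _ _; apply: eq_in_restr.
split=> [f g Cf Cg|].
  exists (glue f g); first exact: glue_centralizer.
  by rewrite restr_glue1 ?restr_glue2 //; [exact: Cf.1 | exact: Cg.1].
split=> [psi chi Cpsi Cchi|].
  have [psiS1 psiS2] := stableC _ Cpsi; have [chiS1 chiS2] := stableC _ Cchi.
  by rewrite (restrD psiS1 chiS1) (restrD psiS2 chiS2).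
split=> [psi chi Cpsi Cchi|].
  have [psiS1 psiS2] := stableC _ Cpsi; have [chiS1 chiS2] := stableC _ Cchi.
  by rewrite (restr_comp psiS1 chiS1) (restr_comp psiS2 chiS2).
split; first by rewrite !restr_id.
move=> z psi _ Cpsi; have [psiS1 psiS2] := stableC _ Cpsi.
by rewrite (restrZ psiS1) (restrZ psiS2).
Qed.

End DirectSum.

Section KerImPow.
Context {R : pzRingType} {M : lmodType R} (phi : {linear M -> M}) (r : nat).

Lemma iter_centralizer {psi : M -> M} : psi \o phi = phi \o psi ->
  forall n x, iter n phi (psi x) = psi (iter n phi x).
Proof.
move=> psi_phi n x; elim: n => [|n IH] //=; rewrite IH.
exact: (congr1 (fun h => h (iter n phi x)) (esym psi_phi)).
Qed.

Lemma centralizer_kerpow_stable psi :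
  centralizer phi psi -> {homo psi : x / x \in kerpow phi r}.
Proof.
move=> [psi_lin psi_phi] x.
rewrite !unfold_in /kerpow /= (iter_centralizer psi_phi).
by move=> /eqP ->; rewrite (linear_zero psi_lin).
Qed.

Lemma centralizer_impow_stable psi :
  centralizer phi psi -> {homo psi : x / x \in impow phi r}.
Proof.
move=> [_ psi_phi] x; rewrite !unfold_in /impow => /asboolP [y ->].
by apply/asboolP; exists (psi y); rewrite (iter_centralizer psi_phi).
Qed.

Lemma phi_ker_restr : @phi_ker R M phi r = restr phi.
Proof.
apply: funext => k; apply: val_inj.
by rewrite val_restr //; apply: kerpow_stable.
Qed.

Lemma phi_im_restr : @phi_im R M phi r = restr phi.
Proof.
apply: funext => k; apply: val_inj.
by rewrite val_restr //; apply: impow_stable.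
Qed.

End KerImPow.

Theorem lemma5p1 (R : pzRingType) (M : lmodType R) (phi : {linear M -> M})
    (r : nat) :
  (1 <= r)%N ->
  direct_sum_eq (kerpow phi r) (impow phi r) ->
  exists Phi : (M -> M) ->
      (KerMod phi r -> KerMod phi r) * (ImMod phi r -> ImMod phi r),
    Zalg_iso_prod (@centralizer R M phi)
      (@centralizer R (KerMod phi r) (@phi_ker R M phi r))
      (@centralizer R (ImMod phi r) (@phi_im R M phi r)) Phi.
Proof.
move=> _ dsM; exists (fun psi => (restr psi, restr psi)).
rewrite phi_ker_restr phi_im_restr.
apply: (restr_centralizer_iso _ _ dsM) => psi Cpsi.
by split; [apply: centralizer_kerpow_stable | apply: centralizer_impow_stable].
Qed.
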